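(* Let $\tau$ be a triangle function on $\Delta^+$ and $\gamma$ a $\sigma$-additive $\tau$-decomposable measure on a $\sigma$-ring $\Sigma$ of subsets of $\Omega\ne\emptyset$. If $E_n\in\Sigma$, $E_n\subseteq E_{n+1}$ for all $n$ and $\bigcup_n E_n=E$, then $\gamma_{E_n}\to\gamma_E$ weakly; i.e., $\gamma$ is continuous from below.
   Context: $\Delta^+$: functions $F:[-\infty,+\infty]\to[0,1]$ non-decreasing, left-continuous on $\mathbb{R}$, $F(x)=0$ for $x\le0$, $F(+\infty)=1$; $\varepsilon_0(x)=1$ if $x>0$, else $0$. A triangle function is a symmetric, associative map $\tau:\Delta^+\times\Delta^+\to\Delta^+$, non-decreasing in each variable, with identity $\varepsilon_0$; $\bigoplus_{k=1}^nG_k=\tau(G_1,\bigoplus_{k=2}^nG_k)$. Weak convergence: $G_n\to G$ iff $G_n(x)\to G(x)$ at every $x\in\mathbb{R}$ where $G$ is continuous; $\bigoplus_{n=1}^\infty G_n:=\lim_{n\to\infty}\bigoplus_{k=1}^nG_k$ (weak limit). A $\tau$-decomposable measure on a ring $\Sigma$ is $\gamma:\Sigma\to\Delta^+$ with $\gamma_\emptyset=\varepsilon_0$ and $\gamma_{E\cup F}=\tau(\gamma_E,\gamma_F)$ for disjoint $E,F\in\Sigma$. It is $\sigma$-additive (on a $\sigma$-ring) if $\gamma_{\bigcup_{n}E_n}=\bigoplus_{n=1}^\infty\gamma_{E_n}$ for every sequence of pairwise disjoint $E_n\in\Sigma$. It is continuous from below if $\gamma_{E_n}\to\gamma_E$ weakly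 whenever $E_n\subseteq E_{n+1}$, $\bigcup E_n=E$ in $\Sigma$. *)

From HB Require Import structures.
From mathcomp Require Import all_boot all_order all_algebra.
From mathcomp Require Import all_classical all_reals all_analysis.
Set Implicit Arguments. Unset Strict Implicit. Unset Printing Implicit Defensive.
Import Order.TTheory GRing.Theory Num.Theory.
Import numFieldNormedType.Exports.
Local Open Scope classical_set_scope.
Local Open Scope ring_scope.

(* Elements of Delta^+ are represented by their restriction to R: the values
   at -oo and +oo are forced to be 0 and 1 respectively. *)
Definition dplus (R : realType) (F : R -> R) : Prop :=
  [/\ (forall x, 0 <= F x <= 1),
      (forall x y, x <= y -> F x <= F y),
      (forall x, F y @[y --> x^'-] --> F x)
    & (forall x, x <= 0 -> F x = 0)].

Definition eps0 (R : realType) : R -> R := fun x => if 0 < x then 1 else 0.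

Definition dle (R : realType) (F G : R -> R) : Prop := forall x, F x <= G x.

Definition triangle_function (R : realType) (tau : (R -> R) -> (R -> R) -> (R -> R)) : Prop :=
  [/\ (forall F G, dplus F -> dplus G -> dplus (tau F G)),
      (forall F G, dplus F -> dplus G -> tau F G = tau G F),
      (forall F G H, dplus F -> dplus G -> dplus H -> tau F (tau G H) = tau (tau F G) H),
      ((forall F F' G, dplus F -> dplus F' -> dplus G -> dle F F' -> dle (tau F G) (tau F' G)) /\
       (forall F G G', dplus F -> dplus G -> dplus G' -> dle G G' -> dle (tau F G) (tau F G')))
    & (forall F, dplus F -> tau F (@eps0 R) = F)].

(* tsum tau G n = G 0 (+) (G 1 (+) ( ... (+) G n)), right-nested as in
   \bigoplus_{k=1}^n G_k = tau(G_1, \bigoplus_{k=2}^n G_k) (0-indexed) *)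
Definition tsum (R : realType) (tau : (R -> R) -> (R -> R) -> (R -> R))
  (G : nat -> R -> R) (n : nat) : R -> R :=
  foldr (fun k acc => tau (G k) acc) (G n) (iota 0 n).

Definition weak_conv (R : realType) (Gn : nat -> R -> R) (G : R -> R) : Prop :=
  forall x : R, {for x, continuous G} -> (fun n => Gn n x) @ \oo --> G x.

Definition is_sigma_ring (Omega : Type) (S : set (set Omega)) : Prop :=
  [/\ S set0,
      (forall A B, S A -> S B -> S (A `\` B))
    & (forall A : nat -> set Omega, (forall n, S (A n)) -> S (\bigcup_n A n))].

Definition tau_decomposable (R : realType) (Omega : Type)
  (tau : (R -> R) -> (R -> R) -> (R -> R)) (S : set (set Omega))
  (gamma : set Omega -> R -> R) : Prop :=
  [/\ (forall E, S E -> dplus (gamma E)),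
      gamma set0 = @eps0 R
    & (forall E F, S E -> S F -> E `&` F = set0 -> gamma (E `|` F) = tau (gamma E) (gamma F))].

Definition tau_sigma_additive (R : realType) (Omega : Type)
  (tau : (R -> R) -> (R -> R) -> (R -> R)) (S : set (set Omega))
  (gamma : set Omega -> R -> R) : Prop :=
  forall E : nat -> set Omega, (forall n, S (E n)) ->
    (forall m n, m <> n -> E m `&` E n = set0) ->
    weak_conv (tsum tau (fun n => gamma (E n))) (gamma (\bigcup_n E n)).

(** By τ-decomposability, the partial τ-sums of γ over the disjointed
    sequence [seqD E] = E_0, E_1 \ E_0, E_2 \ E_1, ... telescope to γ(E_n).
    Since [seqD E] is pairwise disjoint with union E, σ-additivity says
    exactly that these partial sums converge weakly to γ(E). *)
From mathcomp Require Import all_boot all_order all_algebra.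
From mathcomp Require Import all_classical all_reals all_analysis.
Local Open Scope classical_set_scope.

Lemma setDU_chain {T : Type} [A B C : set T] : A `<=` B -> B `<=` C ->
  (B `\` A) `|` (C `\` B) = C `\` A.
Proof.
move=> AB BC; apply/seteqP; split=> x /=.
  by case=> [[Bx nAx]|[Cx nBx]]; split=> //; [exact: BC | move/AB].
by case=> Cx Ax; have [Bx|Bx] := pselect (B x); [left|right].
Qed.

Lemma setDI_chain {T : Type} (A B C : set T) :
  (B `\` A) `&` (C `\` B) = set0.
Proof. by apply/seteqP; split=> x // [[Bx _] [_ nBx]]. Qed.

Section tau_sum_seqD.
Context {R : realType} {Omega : Type}.
Context {tau : (R -> R) -> (R -> R) -> (R -> R)} {S : set (set Omega)}.
Context {gamma : set Omega -> R -> R}.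
Hypothesis S0 : S set0.
Hypothesis S_setD : forall A B, S A -> S B -> S (A `\` B).
Hypothesis gammaU : forall A B, S A -> S B -> A `&` B = set0 ->
  gamma (A `|` B) = tau (gamma A) (gamma B).

Lemma gamma_setD_chain (A B C : set Omega) : S A -> S B -> S C ->
  A `<=` B -> B `<=` C ->
  gamma (C `\` A) = tau (gamma (B `\` A)) (gamma (C `\` B)).
Proof.
move=> SA SB SC AB BC.
by rewrite -(setDU_chain AB BC) gammaU ?setDI_chain //; apply: S_setD.
Qed.

Context {E : nat -> set Omega}.
Hypothesis SE : forall n, S (E n).
Hypothesis ndE : nondecreasing_seq E.

Lemma S_seqD n : S (seqD E n).
Proof. by case: n => [|n] //=; apply: S_setD. Qed.

Lemma subset_nondecreasing m n : (m <= n)%N -> E m `<=` E n.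
Proof. by move=> /ndE/subsetPset. Qed.

Lemma tsum_seqD_suffix k m :
  foldr (fun i acc => tau (gamma (seqD E i)) acc) (gamma (seqD E (m.+1 + k)))
        (iota m.+1 k)
  = gamma (E (m.+1 + k) `\` E m).
Proof.
elim: k m => [|k IHk] m; first by rewrite addn0.
(* [last] stops [/=] from unfolding [seqD] in the base of the fold. *)
rewrite -addSnnS; set last := gamma _; rewrite /= {}/last IHk.
rewrite [RHS](@gamma_setD_chain (E m) (E m.+1)) //; apply: subset_nondecreasing => //.
by rewrite addSn ltnW // ltnS leq_addr.
Qed.

Lemma tsum_seqD n : tsum tau (gamma \o seqD E) n = gamma (E n).
Proof.
case: n => [|n] //; rewrite /tsum /= -[n.+1]add1n tsum_seqD_suffix add1n.
rewrite -[E n.+1]setD0 (@gamma_setD_chain set0 (E 0)) ?setD0 //.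
exact: subset_nondecreasing.
Qed.

Lemma seqD_disjoint m n : m <> n -> seqD E m `&` seqD E n = set0.
Proof.
move=> mn; apply: contra_notP mn => /eqP/set0P.
exact: (trivIset_seqD ndE).
Qed.

End tau_sum_seqD.

Theorem lemma3p4 (R : realType) (Omega : Type) (omega0 : Omega)
  (tau : (R -> R) -> (R -> R) -> (R -> R)) (S : set (set Omega))
  (gamma : set Omega -> R -> R) :
  triangle_function tau -> is_sigma_ring S ->
  tau_decomposable tau S gamma -> tau_sigma_additive tau S gamma ->
  forall (En : nat -> set Omega) (E : set Omega),
    (forall n, S (En n)) -> (forall n, En n `<=` En n.+1) ->
    \bigcup_n En n = E ->
    weak_conv (fun n => gamma (En n)) (gamma E).
Proof.
move=> _ [S0 S_setD _] [_ _ gammaU] gamma_add En E SEn incr <-.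
have ndEn : nondecreasing_seq En.
  by apply/nondecreasing_seqP => n; apply/subsetPset.
have -> : (fun n => gamma (En n)) = tsum tau (gamma \o seqD En).
  by apply: funext => n; rewrite (tsum_seqD S0 S_setD gammaU SEn ndEn).
rewrite -eq_bigcup_seqD; apply: gamma_add.
- exact: (S_seqD S_setD SEn).
- exact: (seqD_disjoint ndEn).
Qed.
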